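(* Let $F\in\mathbb{R}[x_1,\dots,x_n]$ be a form (homogeneous polynomial) with $F(X)>0$ for all $X\in\mathbb{T}_n=\{(x_1,\dots,x_n): x_i\ge0,\ \sum_i x_i=1\}$. Then the sequence of sets $\{\mathrm{SDS}^{(m)}(F)\}_{m\ge1}$ is positively terminating, i.e., there exists a positive integer $k$ such that every form in $\mathrm{SDS}^{(k)}(F)$ has all coefficients nonnegative.
   Context: $W_n$ is the $n\times n$ matrix with $(W_n)_{ij}=1/j$ for $i\le j$ and $0$ for $i>j$. For a permutation $[k_1\cdots k_n]$ of $1,\dots,n$, $P_{[k_1\cdots k_n]}$ is the permutation matrix with $1$ in positions $(i,k_i)$ and $0$ elsewhere, and $B_{[k_1\cdots k_n]}=P_{[k_1\cdots k_n]}W_n$; $PW_n$ denotes the set of these $n!$ matrices. For $m\ge1$, $\mathrm{SDS}^{(m)}(F)$ is the set of forms $F(B_{[\alpha_1]}B_{[\alpha_2]}\cdots B_{[\alpha_m]}X^{\mathrm{Tr}})$, $X=(x_1,\dots,x_n)$, as $B_{[\alpha_1]},\dots,B_{[\alpha_m]}$ range independently over $PW_n$. *)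

From HB Require Import structures.
From mathcomp Require Import all_boot all_order all_algebra all_fingroup.
From mathcomp Require Import mpoly.
From mathcomp Require Import reals.
Set Implicit Arguments. Unset Strict Implicit. Unset Printing Implicit Defensive.
Import Order.TTheory GRing.Theory Num.Theory.
Local Open Scope ring_scope.

(* W_n : (W_n)_{ij} = 1/j if i <= j, 0 otherwise (1-indexed);
   with 0-indexed ordinals the entry (i,j) is 1/(j+1) when i <= j. *)
Definition W_mx (R : fieldType) (n : nat) : 'M[R]_n :=
  \matrix_(i < n, j < n) (if (i <= j)%N then (j.+1%:R)^-1 else 0).

(* P_[k_1...k_n] has 1 in positions (i, k_i): this is perm_mx s with s i = k_i
   (perm_mx s = row_perm s 1, whose (i,j) entry is (s i == j)). *)
Definition P_mx (R : fieldType) (n : nat) (s : 'S_n) : 'M[R]_n := perm_mx s.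

Definition B_mx (R : fieldType) (n : nat) (s : 'S_n) : 'M[R]_n :=
  P_mx R s *m W_mx R n.

Definition B_prod (R : fieldType) (n : nat) (al : seq 'S_n) : 'M[R]_n :=
  foldr (fun s M => B_mx R s *m M) 1%:M al.

(* F(M X^T): substitute x_i := sum_j M_{ij} x_j *)
Definition subst_mx (R : fieldType) (n : nat) (M : 'M[R]_n)
  (F : {mpoly R[n]}) : {mpoly R[n]} :=
  comp_mpoly [tuple \sum_(j < n) M i j *: 'X_j | i < n] F.

Definition SDS (R : fieldType) (n m : nat) (F : {mpoly R[n]}) : {mpoly R[n]} -> Prop :=
  fun G => exists al : m.-tuple 'S_n, G = subst_mx (B_prod R al) F.

(* By compactness F has a positive minimum mu on the simplex.
   Each matrix B_[s] = P_[s] W_n has columns that are uniform averages over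
   prefixes {k | s k <= j}; so right multiplication by it keeps a matrix
   column-stochastic and shrinks the spread max_j M i j - min_j M i j of
   every row by the factor 1 - 1/n.  For k large the product M has nearly
   constant rows, each close to the corresponding entry of a column p, which
   lies in the simplex.  Writing s = x_1 + ... + x_n, the i-th linear form of
   M X^T is squeezed coefficientwise between a_i s and b_i s, with a_i <= p_i
   <= b_i and b_i - a_i small; hence F(M X^T) dominates K s^d for a constant
   K >= F(p) - d (b - a) sum_e |F_e| >= mu - (small) > 0. *)
From HB Require Import structures.
From mathcomp Require Import all_boot all_order all_algebra all_fingroup.
From mathcomp Require Import mpoly.
From mathcomp Require Import reals.
From mathcomp Require Import all_classical topology normedtype derive matrix_normedtype sequences.
From mathcomp Require Import ring lra.
Import Order.TTheory GRing.Theory Num.Theory.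
Import numFieldNormedType.Exports.
Local Open Scope ring_scope.
Set Implicit Arguments. Unset Strict Implicit.

Section BigContinuity.
Variables (R : numFieldType) (T : topologicalType).

Lemma continuous_sum (I : Type) (r : seq I) (f : I -> T -> R) :
  (forall i, continuous (f i)) -> continuous (fun v => \sum_(i <- r) f i v).
Proof.
move=> hf; elim: r => [|i r IH].
  under eq_fun do rewrite big_nil.
  exact: cst_continuous.
under eq_fun do rewrite big_cons.
by move=> x; apply: continuousD; [exact: hf | exact: IH].
Qed.

Lemma continuous_prod (I : Type) (r : seq I) (f : I -> T -> R) :
  (forall i, continuous (f i)) -> continuous (fun v => \prod_(i <- r) f i v).
Proof.
move=> hf; elim: r => [|i r IH].
  under eq_fun do rewrite big_nil.
  exact: cst_continuous.
under eq_fun do rewrite big_cons.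
by move=> x; exact: (continuousM (hf i x) (IH x)).
Qed.

End BigContinuity.

Lemma meval_continuous (R : numFieldType) (n : nat) (p : {mpoly R[n]}) :
  continuous (fun v : 'rV[R]_n => p.@[v ord0]).
Proof.
under eq_fun do rewrite mevalE.
apply: continuous_sum => m x; apply: (continuousM (@cst_continuous _ _ _ x)).
move: x; apply: continuous_prod => i; under eq_fun do rewrite -(subn0 (m i)) -prodr_const_nat.
by apply: continuous_prod => _; exact: coord_continuous.
Qed.

Section SimplexMinimum.
Variables (R : realType) (n : nat).
Local Open Scope classical_set_scope.

Definition simplex : set 'rV[R]_n :=
  [set v | (forall i, 0 <= v ord0 i) /\ \sum_(i < n) v ord0 i = 1].

Lemma simplex_compact : compact simplex.
Proof.
apply: (@subclosed_compact _ _ [set v : 'rV[R]_n | forall i, `[0%R, 1%R]%classic (v ord0 i)]).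
- have -> : simplex = (\bigcap_(i in setT) [set v : 'rV[R]_n | 0 <= v ord0 i]) `&`
      ((fun v : 'rV[R]_n => \sum_(i < n) v ord0 i) @^-1` [set 1]).
    by apply/seteqP; split => v /= [h1 h2]; split => // i; [move=> _|]; apply: h1.
  apply: closedI.
    apply: closed_bigI => i _.
    apply: (@preimage_closed _ _ (fun v : 'rV[R]_n => v ord0 i) [set x | 0 <= x]).
      by move=> v _; exact: coord_continuous.
    exact: closed_ge.
  apply: (@preimage_closed _ _ (fun v : 'rV[R]_n => \sum_(i < n) v ord0 i) [set 1]).
    by move=> v _; apply: continuous_sum => i; exact: coord_continuous.
  exact: closed_eq.
- by apply: (@rV_compact R n (fun _ => `[0%R, 1%R]%classic)) => i; exact: segment_compact.
- move=> v [h0 h1] i /=; rewrite in_itv /= h0 -h1 (bigD1 i) //= lerDl.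
  by apply: sumr_ge0 => j _; exact: h0.
Qed.

Lemma meval_simplex_lbound (F : {mpoly R[n]}) : (0 < n)%N ->
  (forall x : 'I_n -> R, (forall i, 0 <= x i) -> \sum_(i < n) x i = 1 -> 0 < F.@[x]) ->
  exists2 mu : R, 0 < mu & forall x : 'I_n -> R,
    (forall i, 0 <= x i) -> \sum_(i < n) x i = 1 -> mu <= F.@[x].
Proof.
move=> n0 hpos.
have simplex0 : simplex !=set0.
  exists (const_mx n%:R^-1); split => [i|]; rewrite ?mxE ?invr_ge0 //.
  by under eq_bigr do rewrite mxE; rewrite sumr_const card_ord -[_ *+ n]mulr_natr mulVf // pnatr_eq0 -lt0n.
have Fcont : {within simplex, continuous (fun v : 'rV[R]_n => F.@[v ord0])}.
  by apply: continuous_subspaceT; exact: meval_continuous.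
have [c /set_mem [c0 c1] cmin] := EVT_min_rV simplex0 simplex_compact Fcont.
exists F.@[c ord0]; first exact: hpos.
move=> x x0 x1; have -> : x = (\row_i x i) ord0 by apply: funext => i; rewrite mxE.
apply: cmin; apply/mem_set; split => [i|]; rewrite ?mxE //.
by under eq_bigr do rewrite mxE.
Qed.

End SimplexMinimum.

Lemma exists_expr_le (R : realType) (c e : R) : 0 <= c < 1 -> 0 < e ->
  exists k, (0 < k)%N /\ c ^+ k <= e.
Proof.
move=> /andP[c0 c1] e0.
have : `|c| < 1 by rewrite ger0_norm.
move=> /cvg_expr /cvgr0Pnorm_le /(_ e e0) [N _ hN].
exists N.+1; split => //.
by have := hN N.+1 (leqnSn N); rewrite /= ger0_norm ?exprn_ge0.
Qed.

Section Averages.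
Variables (R : realFieldType) (I : finType).

Definition avg (A : {set I}) (x : I -> R) := #|A|%:R^-1 * \sum_(i in A) x i.

Lemma avgN (A : {set I}) (x : I -> R) : avg A (fun i => - x i) = - avg A x.
Proof. by rewrite /avg sumrN mulrN. Qed.

Lemma avg_sub_le (A B : {set I}) (x : I -> R) (w : R) :
  A \subset B -> (0 < #|A|)%N -> (forall i j, x i - x j <= w) ->
  avg A x - avg B x <= (1 - #|A|%:R / #|B|%:R) * w.
Proof.
move=> sAB A0 hw; set D := B :\: A.
have hB : \sum_(i in B) x i = \sum_(i in A) x i + \sum_(i in D) x i.
  by rewrite (big_setID A) /= (finset.setIidPr sAB).
have hcB : #|B|%:R = #|A|%:R + #|D|%:R :> R.
  by rewrite -natrD -(cardsID A B) (finset.setIidPr sAB).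
rewrite /avg hB hcB.
set SA := \sum_(i in A) x i; set SD := \sum_(i in D) x i.
set a := #|A|%:R; set c := #|D|%:R.
have hA : 0 < a by rewrite /a ltr0n.
have hc : 0 <= c by rewrite /c ler0n.
have hpair : c * SA - a * SD <= a * c * w.
  have -> : c * SA - a * SD = \sum_(i in A) \sum_(j in D) (x i - x j).
    under eq_bigr do rewrite sumrB sumr_const.
    by rewrite sumrB sumrMnl sumr_const !mulr_natl.
  have -> : a * c * w = \sum_(i in A) \sum_(j in D) w.
    by rewrite !sumr_const -mulrA !mulr_natl.
  by apply: ler_sum => i _; apply: ler_sum => j _; apply: hw.
clearbody SA SD a c; rewrite -subr_ge0.
have -> : (1 - a / (a + c)) * w - (a^-1 * SA - (a + c)^-1 * (SA + SD)) =
    (a * c * w - (c * SA - a * SD)) / (a * (a + c)).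
  by field; rewrite !gt_eqF //; lra.
by rewrite divr_ge0 ?subr_ge0 // mulr_ge0 ?addr_ge0 // ltW.
Qed.

End Averages.

Section StochasticSteps.
Variables (R : realFieldType) (n : nat).
Implicit Types (M : 'M[R]_n) (s : 'S_n).

Definition col_stochastic M :=
  (forall i j, 0 <= M i j) /\ forall j, \sum_(i < n) M i j = 1.

Lemma col_stochastic_le1 M : col_stochastic M -> forall i j, M i j <= 1.
Proof.
move=> [hM0 hM1] i j; rewrite -(hM1 j) (bigD1 i) //= lerDl.
by apply: sumr_ge0 => k _; apply: hM0.
Qed.

Definition row_spread_le M (w : R) := forall i j j', M i j - M i j' <= w.

Definition B_col_supp s (j : 'I_n) : {set 'I_n} := [set k | (s k <= j)%N].

Lemma card_B_col_supp s j : #|B_col_supp s j| = j.+1.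
Proof.
have -> : B_col_supp s j = s @^-1: [set t : 'I_n | (t < j.+1)%N] by apply/setP => k; rewrite !inE.
rewrite card_preimset; last exact: perm_inj.
by rewrite -sum1dep_card -(big_ord_widen _ (fun _ => 1%N)) ?sum1_card ?card_ord.
Qed.

Lemma B_col_supp_sub s (j j' : 'I_n) : (j <= j')%N -> B_col_supp s j \subset B_col_supp s j'.
Proof. by move=> hj; apply/fintype.subsetP => k; rewrite !inE => /leq_trans; apply. Qed.

(* Row k of P_[s] W_n is row s k of W_n, so column j of B_[s] is the uniform
   distribution on B_col_supp s j. *)
Lemma mulmx_B_mxE M s i j : (M *m B_mx R s) i j = avg (B_col_supp s j) (M i).
Proof.
rewrite /avg card_B_col_supp mxE mulr_sumr [RHS]big_mkcond /=; apply: eq_bigr => k _.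
rewrite /B_mx /P_mx -row_permE !mxE inE.
by case: ifP => _; rewrite ?mulr0 // mulrC.
Qed.

Lemma col_stochastic_mulB M s : col_stochastic M -> col_stochastic (M *m B_mx R s).
Proof.
move=> [hM0 hM1]; split => [i j|j]; rewrite ?mulmx_B_mxE /avg.
  by rewrite mulr_ge0 ?invr_ge0 // sumr_ge0.
under eq_bigr do rewrite mulmx_B_mxE /avg.
rewrite -mulr_sumr exchange_big /=; under eq_bigr do rewrite hM1.
by rewrite sumr_const -mulr_natr mul1r mulVf // pnatr_eq0 card_B_col_supp.
Qed.

Lemma row_spread_mulB M s w :
  row_spread_le M w -> row_spread_le (M *m B_mx R s) ((1 - n%:R^-1) * w).
Proof.
move=> hw i.
have w0 : 0 <= w by have := hw i i i; rewrite subrr.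
have n0 : (0 < n)%N by apply: leq_ltn_trans (ltn_ord i).
have key (j1 j2 : 'I_n) (x : 'I_n -> R) : (j1 <= j2)%N ->
    (forall k k', x k - x k' <= w) ->
    avg (B_col_supp s j1) x - avg (B_col_supp s j2) x <= (1 - n%:R^-1) * w.
  move=> hj hx; have hA : (0 < #|B_col_supp s j1|)%N by rewrite card_B_col_supp.
  apply: le_trans (avg_sub_le (B_col_supp_sub s hj) hA hx) _.
  rewrite ler_wpM2r // lerD2l lerN2 !card_B_col_supp.
  rewrite ler_pdivlMr ?ltr0n // mulrC; apply: (@le_trans _ _ 1); last by rewrite ler1n.
  by rewrite ler_pdivrMr ?ltr0n // mul1r ler_nat ltn_ord.
move=> j j'; rewrite !mulmx_B_mxE; case: (leqP j j') => hj; first exact: key hj (hw i).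
have hN k k' : - M i k - - M i k' <= w by rewrite opprK addrC; apply: hw.
by have := key _ _ _ (ltnW hj) hN; rewrite !avgN opprK addrC.
Qed.

End StochasticSteps.

Lemma B_prod_rcons (R : realFieldType) (n : nat) (al : seq 'S_n) (s : 'S_n) :
  B_prod R (rcons al s) = B_prod R al *m B_mx R s.
Proof. by elim: al => [|a al IH] /=; rewrite ?mulmx1 ?mul1mx // IH mulmxA. Qed.

Lemma col_stochastic_B_prod (R : realFieldType) (n : nat) (al : seq 'S_n) :
  col_stochastic (B_prod R al).
Proof.
elim/last_ind: al => [|al s IH]; last by rewrite B_prod_rcons; apply: col_stochastic_mulB.
split=> [i j|j]; first by rewrite mxE ler0n.
rewrite (bigD1 j) //= big1 => [|i /negbTE hij]; first by rewrite mxE eqxx addr0.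
by rewrite mxE hij.
Qed.

Lemma row_spread_B_prod (R : realFieldType) (n : nat) (al : seq 'S_n) :
  row_spread_le (B_prod R al) ((1 - n%:R^-1) ^+ size al).
Proof.
elim/last_ind: al => [|al s IH]; last first.
  by rewrite B_prod_rcons size_rcons exprS; apply: row_spread_mulB.
by move=> i j j'; rewrite expr0 !mxE; case: (i == j); case: (i == j') => /=; lra.
Qed.

Section NonnegCoef.
Variables (R : numDomainType) (n : nat).
Implicit Types p q : {mpoly R[n]}.

Definition nneg_coef p := forall m, 0 <= p@_m.

Lemma nneg_coef0 : nneg_coef 0.
Proof. by move=> m; rewrite mcoeff0. Qed.

Lemma nneg_coef1 : nneg_coef 1.
Proof. by move=> m; rewrite mcoeff1 ler0n. Qed.

Lemma nneg_coefX m : nneg_coef 'X_[m].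
Proof. by move=> k; rewrite mcoeffX ler0n. Qed.

Lemma nneg_coefD p q : nneg_coef p -> nneg_coef q -> nneg_coef (p + q).
Proof. by move=> hp hq m; rewrite mcoeffD addr_ge0. Qed.

Lemma nneg_coefZ c p : 0 <= c -> nneg_coef p -> nneg_coef (c *: p).
Proof. by move=> hc hp m; rewrite mcoeffZ mulr_ge0. Qed.

Lemma nneg_coefM p q : nneg_coef p -> nneg_coef q -> nneg_coef (p * q).
Proof. by move=> hp hq m; rewrite mcoeffM sumr_ge0 // => k _; rewrite mulr_ge0. Qed.

Lemma nneg_coef_sum (I : Type) (r : seq I) (P : pred I) (f : I -> {mpoly R[n]}) :
  (forall i, P i -> nneg_coef (f i)) -> nneg_coef (\sum_(i <- r | P i) f i).
Proof. by move=> hf; apply: big_ind => //; [exact: nneg_coef0 | exact: nneg_coefD]. Qed.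

Lemma nneg_coef_prod (I : Type) (r : seq I) (P : pred I) (f : I -> {mpoly R[n]}) :
  (forall i, P i -> nneg_coef (f i)) -> nneg_coef (\prod_(i <- r | P i) f i).
Proof. by move=> hf; apply: big_ind => //; [exact: nneg_coef1 | exact: nneg_coefM]. Qed.

Lemma nneg_coefXn p k : nneg_coef p -> nneg_coef (p ^+ k).
Proof. by move=> hp; rewrite -(subn0 k) -prodr_const_nat; apply: nneg_coef_prod. Qed.

Lemma nneg_coef_linear_sub (x y : 'I_n -> R) : (forall j, x j <= y j) ->
  nneg_coef (\sum_(j < n) y j *: 'X_j - \sum_(j < n) x j *: 'X_j).
Proof.
move=> hxy; rewrite -sumrB; apply: nneg_coef_sum => j _; rewrite -scalerBl.
by apply: nneg_coefZ; [rewrite subr_ge0 | exact: nneg_coefX].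
Qed.

Lemma nneg_coef_prod_sub (I : Type) (r : seq I) (u v : I -> {mpoly R[n]}) :
  (forall i, nneg_coef (u i)) -> (forall i, nneg_coef (v i - u i)) ->
  nneg_coef (\prod_(i <- r) v i - \prod_(i <- r) u i).
Proof.
move=> hu hvu; elim: r => [|i r IH]; first by rewrite !big_nil subrr; exact: nneg_coef0.
have hv j : nneg_coef (v j) by rewrite -(subrK (u j) (v j)); apply: nneg_coefD.
have -> : \prod_(j <- i :: r) v j - \prod_(j <- i :: r) u j =
    v i * (\prod_(j <- r) v j - \prod_(j <- r) u j) + (v i - u i) * \prod_(j <- r) u j.
  by rewrite !big_cons mulrBr mulrBl addrA subrK.
by apply: nneg_coefD; apply: nneg_coefM => //; apply: nneg_coef_prod.
Qed.

Lemma nneg_coef_exp_sub p q k : nneg_coef p -> nneg_coef (q - p) ->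
  nneg_coef (q ^+ k - p ^+ k).
Proof. by move=> hp hqp; rewrite -(subn0 k) -!prodr_const_nat; exact: nneg_coef_prod_sub. Qed.

End NonnegCoef.

Section ProductBounds.
Variable R : realDomainType.

Lemma prod_sub_le_sum (I : Type) (r : seq I) (a b : I -> R) :
  (forall i, 0 <= a i) -> (forall i, a i <= b i) -> (forall i, b i <= 1) ->
  \prod_(i <- r) b i - \prod_(i <- r) a i <= \sum_(i <- r) (b i - a i).
Proof.
move=> ha hab hb1; elim: r => [|i r IH]; first by rewrite !big_nil subrr.
rewrite !big_cons.
have hA0 : 0 <= \prod_(j <- r) a j by apply: prodr_ge0 => j _.
have hAB : \prod_(j <- r) a j <= \prod_(j <- r) b j by apply: ler_prod => j _; rewrite ha hab.
have hB1 : \prod_(j <- r) b j <= 1.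
  by apply: prodr_ile1 => j _; rewrite (le_trans (ha j)) ?hab ?hb1.
move: IH hA0 hAB hB1 (ha i) (hab i) (hb1 i).
set A := \prod_(j <- r) a j; set B := \prod_(j <- r) b j; nra.
Qed.

Lemma expr_sub_le (a b : R) k : 0 <= a -> a <= b -> b <= 1 ->
  b ^+ k - a ^+ k <= k%:R * (b - a).
Proof.
move=> ha hab hb1; rewrite mulr_natl -(subn0 k) -!prodr_const_nat -sumr_const_nat.
exact: prod_sub_le_sum.
Qed.

Lemma monomial_le (n : nat) (e : 'X_{1..n}) (a b : 'I_n -> R) :
  (forall i, 0 <= a i) -> (forall i, a i <= b i) ->
  \prod_(i < n) a i ^+ e i <= \prod_(i < n) b i ^+ e i.
Proof.
move=> ha hab; apply: ler_prod => i _; rewrite exprn_ge0 //=.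
by rewrite lerXn2r ?nnegrE // (le_trans (ha i)).
Qed.

Lemma monomial_sub_le (n : nat) (e : 'X_{1..n}) (a b : 'I_n -> R) :
  (forall i, 0 <= a i) -> (forall i, a i <= b i) -> (forall i, b i <= 1) ->
  \prod_(i < n) b i ^+ e i - \prod_(i < n) a i ^+ e i <=
  \sum_(i < n) (e i)%:R * (b i - a i).
Proof.
move=> ha hab hb1; have hb0 i : 0 <= b i by rewrite (le_trans (ha i)).
apply: le_trans (prod_sub_le_sum _ _ _ _) _.
- by move=> i; rewrite exprn_ge0.
- by move=> i; rewrite lerXn2r ?nnegrE.
- by move=> i; rewrite exprn_ile1.
- by apply: ler_sum => i _; apply: expr_sub_le.
Qed.

End ProductBounds.

Lemma nneg_coef_mmap1_sub (R : numDomainType) (n k : nat) (u v : 'I_n -> {mpoly R[k]})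
    (e : 'X_{1..n}) :
  (forall i, nneg_coef (u i)) -> (forall i, nneg_coef (v i - u i)) ->
  nneg_coef (mmap1 v e - mmap1 u e).
Proof.
move=> hu hvu; have hv i : nneg_coef (v i) by rewrite -(subrK (u i) (v i)); apply: nneg_coefD.
apply: nneg_coef_prod_sub => i; first exact: nneg_coefXn.
exact: nneg_coef_exp_sub.
Qed.

Lemma mmap1_scale (R : comNzRingType) (n k : nat) (c : 'I_n -> R) (s : {mpoly R[k]})
    (e : 'X_{1..n}) :
  mmap1 (fun i => c i *: s) e = mmap1 c e *: s ^+ mdeg e.
Proof.
rewrite /mmap1 mdegE /=; under eq_bigr do rewrite exprZn.
by rewrite scaler_prod prodrXr.
Qed.

Section BoxLowerBound.
Variables (R : realFieldType) (n : nat) (F : {mpoly R[n]}) (a b : 'I_n -> R).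
Hypotheses (ha : forall i, 0 <= a i) (hab : forall i, a i <= b i).

(* The least value of F@_e * x^e over the box a <= x <= b. *)
Definition term_lbound (e : 'X_{1..n}) :=
  if 0 <= F@_e then F@_e * mmap1 a e else F@_e * mmap1 b e.

Lemma term_lbound_ge (p : 'I_n -> R) e :
  (forall i, a i <= p i) -> (forall i, p i <= b i) ->
  F@_e * mmap1 p e - `|F@_e| * (mmap1 b e - mmap1 a e) <= term_lbound e.
Proof.
move=> hap hpb.
have hA : mmap1 a e <= mmap1 p e by apply: monomial_le.
have hB : mmap1 p e <= mmap1 b e by apply: monomial_le => // i; rewrite (le_trans (ha i)).
rewrite /term_lbound; case: ifP => hF.
  by rewrite ger0_norm //; nra.
by rewrite ltr0_norm ?ltNge ?hF //; nra.
Qed.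

Variables (d : nat) (s : {mpoly R[n]}) (t : n.-tuple {mpoly R[n]}).
Hypotheses (hF : F \is d.-homog) (hs : nneg_coef s).
Hypotheses (hlo : forall i, nneg_coef (tnth t i - a i *: s))
           (hhi : forall i, nneg_coef (b i *: s - tnth t i)).

(* Coefficientwise a_i s <= t_i <= b_i s, so each monomial of F(t) lies between
   (prod_i a_i^e_i) s^d and (prod_i b_i^e_i) s^d. *)
Lemma comp_mpoly_sub_lbound :
  nneg_coef (comp_mpoly t F - (\sum_(e <- msupp F) term_lbound e) *: s ^+ d).
Proof.
have hdeg : {in msupp F, forall e, mdeg e = d} by apply/dhomogP.
have has i : nneg_coef (a i *: s) by apply: nneg_coefZ.
have hbs i : nneg_coef (b i *: s) by apply: nneg_coefZ; rewrite ?(le_trans (ha i)).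
rewrite comp_mpolyE scaler_suml -sumrB big_seq; apply: nneg_coef_sum => e he.
rewrite -(hdeg e he) /term_lbound; case: ifP => hFe.
  rewrite -scalerA -scalerBr -mmap1_scale; apply: nneg_coefZ => //.
  exact: nneg_coef_mmap1_sub.
have -> : F@_e *: mmap1 (tnth t) e - (F@_e * mmap1 b e) *: s ^+ mdeg e =
    (- F@_e) *: (mmap1 (fun i => b i *: s) e - mmap1 (tnth t) e).
  by rewrite mmap1_scale scalerBr !scaleNr opprK scalerA addrC.
apply: nneg_coefZ; first by rewrite oppr_ge0 ltW // ltNge hFe.
apply: nneg_coef_mmap1_sub => // i; rewrite -(subrK (a i *: s) (tnth t i)).
exact: nneg_coefD.
Qed.

Hypothesis hb1 : forall i, b i <= 1.

Lemma comp_mpoly_nneg_coef (p : 'I_n -> R) (w : R) :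
  (forall i, a i <= p i) -> (forall i, p i <= b i) -> (forall i, b i - a i <= w) ->
  d%:R * w * \sum_(e <- msupp F) `|F@_e| <= F.@[p] ->
  nneg_coef (comp_mpoly t F).
Proof.
move=> hap hpb hw hFp.
have hdeg : {in msupp F, forall e, mdeg e = d} by apply/dhomogP.
have hgap e : e \in msupp F -> mmap1 b e - mmap1 a e <= d%:R * w.
  move=> he; apply: le_trans (monomial_sub_le e ha hab hb1) _.
  rewrite -(hdeg e he) mdegE natr_sum mulr_suml.
  by apply: ler_sum => i _; rewrite ler_wpM2l.
set K := \sum_(e <- msupp F) term_lbound e.
have hK : 0 <= K.
  have : \sum_(e <- msupp F) (F@_e * mmap1 p e - `|F@_e| * (d%:R * w)) <= K.
    rewrite /K !big_seq; apply: ler_sum => e he.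
    apply: le_trans (term_lbound_ge e hap hpb); rewrite lerD2l lerN2.
    by rewrite ler_wpM2l ?hgap.
  rewrite sumrB -mulr_suml -mevalE; lra.
rewrite -(subrK (K *: s ^+ d) (comp_mpoly t F)).
apply: nneg_coefD; first exact: comp_mpoly_sub_lbound.
by apply: nneg_coefZ; last exact: nneg_coefXn.
Qed.

End BoxLowerBound.

Lemma subst_mx_nneg_coef (R : realFieldType) (n d : nat) (F : {mpoly R[n]}) (M : 'M[R]_n)
    (j0 : 'I_n) (w : R) :
  F \is d.-homog -> (forall i j, 0 <= M i j) -> (forall i j, M i j <= 1) ->
  row_spread_le M w ->
  d%:R * w * \sum_(e <- msupp F) `|F@_e| <= F.@[fun i => M i j0] ->
  nneg_coef (subst_mx M F).
Proof.
move=> hF hM0 hM1 hw hFp.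
(* Squeeze row i between its least and largest entries. *)
pose a i := M i [arg min_(j < j0) M i j]%O.
pose b i := M i [arg max_(j > j0) M i j]%O.
have haM i j : a i <= M i j by rewrite /a; case: arg_minP => // k _; apply.
have hbM i j : M i j <= b i by rewrite /b; case: arg_maxP => // k _; apply.
apply: (@comp_mpoly_nneg_coef _ _ _ a b _ _ d (\sum_(j < n) 'X_j) _ hF _ _ _ _
          (fun i => M i j0) w) => //.
- by move=> i; apply: hM0.
- by move=> i; apply: le_trans (haM i i) (hbM i i).
- by apply: nneg_coef_sum => j _; exact: nneg_coefX.
- by move=> i; rewrite tnth_mktuple scaler_sumr; apply: nneg_coef_linear_sub.
- by move=> i; rewrite tnth_mktuple scaler_sumr; apply: nneg_coef_linear_sub.
- by move=> i; apply: hM1.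
- by move=> i; apply: hw.
Qed.

Unset Implicit Arguments.

Theorem theorem4p1 (R : realType) (n : nat) (hn : (0 < n)%N)
  (F : {mpoly R[n]}) (d : nat) (hF : F \is d.-homog)
  (hpos : forall x : 'I_n -> R,
      (forall i, 0 <= x i) -> \sum_(i < n) x i = 1 -> 0 < F.@[x]) :
  exists k : nat, (0 < k)%N /\
    forall G : {mpoly R[n]}, SDS k F G -> forall m : 'X_{1..n}, 0 <= G@_m.
Proof.
have [mu mu0 hmu] := meval_simplex_lbound hn hpos.
set C := \sum_(e <- msupp F) `|F@_e|.
have C0 : 0 <= C by apply: sumr_ge0 => e _.
have d0 : 0 <= d%:R :> R := ler0n _ _.
pose delta := mu / ((d%:R + 1) * (C + 1)).
have delta0 : 0 < delta by rewrite divr_gt0 // mulr_gt0 // ltr_wpDl.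
have hdelta : d%:R * delta * C <= mu.
  have -> : mu = delta * ((d%:R + 1) * (C + 1)) by rewrite mulfVK // gt_eqF ?mulr_gt0 ?ltr_wpDl.
  clearbody delta; nra.
have hc : 0 <= 1 - (n%:R : R)^-1 < 1.
  have hinv0 : 0 < (n%:R : R)^-1 by rewrite invr_gt0 ltr0n.
  have hinv1 : (n%:R : R)^-1 <= 1 by rewrite invf_le1 ?ler1n ?ltr0n.
  by apply/andP; split; lra.
have [k [k0 hk]] := exists_expr_le hc delta0.
exists k; split => // _ [al ->].
have hM := col_stochastic_B_prod R al.
have hspread : row_spread_le (B_prod R al) delta.
  by move=> i j j'; apply: le_trans (row_spread_B_prod R al i j j') _; rewrite size_tuple.
have hbound : d%:R * delta * C <= F.@[fun i => B_prod R al i (Ordinal hn)].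
  by apply: le_trans hdelta (hmu _ _ _) => [i|]; [exact: hM.1 | exact: hM.2].
exact: (subst_mx_nneg_coef hF hM.1 (col_stochastic_le1 hM) hspread hbound).
Qed.
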